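(* Let $A$ be a non-empty set and let $f\in H_0[\ell_1(A)]_+$ be maximal. Then there exists $\phi\in\ell_\infty(A)^*$ such that $f=g_\phi$, where $g_\phi(x^* )=|\phi(|x^*|)|$ for $x^*\in\ell_\infty(A)$.
   Context: Identify $\ell_1(A)^*$ with $\ell_\infty(A)$. $H[\ell_1(A)]$ is the vector space of positively homogeneous functions $f:\ell_\infty(A)\to\mathbb R$ ($f(\lambda x^* )=\lambda f(x^* )$ for $\lambda>0$), ordered pointwise. For $f\in H[\ell_1(A)]$, $\|f\|_{FBL[\ell_1(A)]}:=\sup\{\sum_{k=1}^n|f(x_k^* )| : n\in\mathbb N,\ x_1^*,\dots,x_n^*\in\ell_\infty(A),\ \sup_{a\in A}\sum_{k=1}^n|x_k^*(a)|\le1\}$, and $H_0[\ell_1(A)]=\{f:\|f\|_{FBL[\ell_1(A)]}<\infty\}$ with positive cone $H_0[\ell_1(A)]_+$. An element $f\in H_0[\ell_1(A)]_+$ is maximal if the only $g\in H_0[\ell_1(A)]_+$ with $g\ge f$ and $\|g\|_{FBL[\ell_1(A)]}=\|f\|_{FBL[\ell_1(A)]}$ is $g=f$. *)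

From Stdlib Require Import Reals Lra List.
From Coquelicot Require Import Coquelicot.
Open Scope R_scope.
Set Implicit Arguments.

(* l_infty(A) = l_1(A)^* : bounded real functions on A. *)
Record linf (A : Type) := Linf {
  lv :> A -> R ;
  lv_bdd : exists M : R, forall a, Rabs (lv a) <= M }.

Definition lscale (A : Type) (l : R) (x : linf A) : linf A.
Proof.
  refine (@Linf A (fun a => l * x a) _).
  destruct (lv_bdd x) as [M HM]. exists (Rabs l * M). intro a.
  rewrite Rabs_mult. apply Rmult_le_compat_l; [apply Rabs_pos | apply HM].
Defined.

Definition ladd (A : Type) (x y : linf A) : linf A.
Proof.
  refine (@Linf A (fun a => x a + y a) _).
  destruct (lv_bdd x) as [M HM]. destruct (lv_bdd y) as [N HN].
  exists (M + N). intro a.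
  eapply Rle_trans; [apply Rabs_triang | apply Rplus_le_compat; auto].
Defined.

Definition labs (A : Type) (x : linf A) : linf A.
Proof.
  refine (@Linf A (fun a => Rabs (x a)) _).
  destruct (lv_bdd x) as [M HM]. exists M. intro a. rewrite Rabs_Rabsolu. apply HM.
Defined.

Definition pos_homogeneous (A : Type) (f : linf A -> R) : Prop :=
  forall (l : R) (x : linf A), 0 < l -> f (lscale l x) = l * f x.

Definition admissible (A : Type) (xs : list (linf A)) : Prop :=
  forall a : A, fold_right (fun (x : linf A) s => Rabs (x a) + s) 0 xs <= 1.

Definition FBL_sums (A : Type) (f : linf A -> R) : R -> Prop :=
  fun r => exists xs : list (linf A),
    admissible xs /\ r = fold_right (fun (x : linf A) s => Rabs (f x) + s) 0 xs.

Definition FBL_norm (A : Type) (f : linf A -> R) : Rbar := Lub_Rbar (FBL_sums f).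

Definition H0 (A : Type) (f : linf A -> R) : Prop :=
  pos_homogeneous f /\ FBL_norm f <> p_infty.

Definition H0_pos (A : Type) (f : linf A -> R) : Prop :=
  H0 f /\ forall x, 0 <= f x.

Definition maximal (A : Type) (f : linf A -> R) : Prop :=
  H0_pos f /\
  forall g : linf A -> R, H0_pos g -> (forall x, f x <= g x) ->
    FBL_norm g = FBL_norm f -> g = f.

(* l_infty(A)^* : norm-continuous linear functionals on l_infty(A);
   continuity is boundedness: |phi x| <= C * M whenever |x(a)| <= M for all a,
   i.e. |phi x| <= C ||x||_infty. *)
Definition linf_dual (A : Type) (phi : linf A -> R) : Prop :=
  (forall x y, phi (ladd x y) = phi x + phi y) /\
  (forall l x, phi (lscale l x) = l * phi x) /\
  (exists C : R, forall (x : linf A) (M : R),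
     (forall a, Rabs (x a) <= M) -> Rabs (phi x) <= C * M).

Definition g_of (A : Type) (phi : linf A -> R) : linf A -> R :=
  fun x => Rabs (phi (labs x)).

(* Let N = ||f||.  The functional
     Phi(x) = sup { sum_k f(x_k) - c N : c >= 0, sum_k |x_k| <= x + c }
   is monotone, superadditive and positively homogeneous, with f(x) <= Phi(|x|),
   Phi(x + c) <= Phi(x) + c N and Phi(1) = N.  For any such functional Theta >= Phi
   with Theta(1) <= N, the map x |-> Theta(|x|) is a positive majorant of f of norm N,
   so it equals f by maximality.  If Phi(y) + Phi(-y) < 0 for some y, the one-step
   Hahn-Banach extension Theta(x) = sup_t Phi(x - t y) - t Phi(-y) is such a
   functional with Theta(y) >= -Phi(-y) > Phi(y); evaluating f at y + c >= 0 through
   Theta and through Phi then gives a contradiction.  So Phi is linear, bounded by N,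
   and f = Phi(|.|) = g_Phi. *)

From Stdlib Require Import Reals Lra List FunctionalExtensionality.
From Coquelicot Require Import Coquelicot.
Open Scope R_scope.
Set Implicit Arguments.

(* [real] sends infinite suprema to 0: the lemmas below assume [E] nonempty and bounded above. *)
Definition sup (E : R -> Prop) : R := real (Lub_Rbar E).

Definition bounded_above (E : R -> Prop) : Prop := exists M, forall r, E r -> r <= M.

Lemma sup_ub (E : R -> Prop) r : bounded_above E -> E r -> r <= sup E.
Proof.
  intros [M HM] Er. unfold sup. destruct (Lub_Rbar_correct E) as [Hub Hlub].
  destruct (Lub_Rbar E) as [l| |].
  - exact (Hub r Er).
  - exfalso. exact (Hlub (Finite M) HM).
  - exfalso. exact (Hub r Er).
Qed.

Lemma sup_least (E : R -> Prop) M :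
  (exists r, E r) -> (forall r, E r -> r <= M) -> sup E <= M.
Proof.
  intros [r Er] HM. unfold sup. destruct (Lub_Rbar_correct E) as [Hub Hlub].
  destruct (Lub_Rbar E) as [l| |].
  - exact (Hlub (Finite M) HM).
  - exfalso. exact (Hlub (Finite M) HM).
  - exfalso. exact (Hub r Er).
Qed.

Lemma sup_le_sup (E1 E2 : R -> Prop) :
  (exists r, E1 r) -> bounded_above E2 ->
  (forall s1, E1 s1 -> exists s2, E2 s2 /\ s1 <= s2) -> sup E1 <= sup E2.
Proof.
  intros ne1 bnd2 H. apply sup_least; auto.
  intros s1 Hs1. destruct (H s1 Hs1) as [s2 [Hs2 Hle]].
  pose proof (sup_ub s2 bnd2 Hs2). lra.
Qed.

Lemma sup_add_le (E1 E2 E3 : R -> Prop) :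
  (exists r, E1 r) -> (exists r, E2 r) -> bounded_above E3 ->
  (forall s1 s2, E1 s1 -> E2 s2 -> exists s3, E3 s3 /\ s1 + s2 <= s3) ->
  sup E1 + sup E2 <= sup E3.
Proof.
  intros ne1 ne2 bnd3 H.
  assert (H1 : forall s2, E2 s2 -> sup E1 <= sup E3 - s2).
  { intros s2 Hs2. apply sup_least; auto. intros s1 Hs1.
    destruct (H s1 s2 Hs1 Hs2) as [s3 [Hs3 Hle]].
    pose proof (sup_ub s3 bnd3 Hs3). lra. }
  assert (sup E2 <= sup E3 - sup E1).
  { apply sup_least; auto. intros s2 Hs2. specialize (H1 s2 Hs2). lra. }
  lra.
Qed.

Lemma sup_scal_le (E1 E2 : R -> Prop) l :
  0 < l -> (exists r, E1 r) -> bounded_above E2 ->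
  (forall s1, E1 s1 -> exists s2, E2 s2 /\ l * s1 <= s2) -> l * sup E1 <= sup E2.
Proof.
  intros Hl ne1 bnd2 H.
  assert (sup E1 <= sup E2 / l).
  { apply sup_least; auto. intros s1 Hs1. destruct (H s1 Hs1) as [s2 [Hs2 Hle]].
    pose proof (sup_ub s2 bnd2 Hs2). apply Rmult_le_reg_l with l; auto.
    field_simplify; lra. }
  apply Rmult_le_compat_l with (r := l) in H0; [|lra].
  field_simplify in H0; lra.
Qed.

Definition fsum (T : Type) (h : T -> R) (xs : list T) : R :=
  fold_right (fun x s => h x + s) 0 xs.

Section FiniteSums.
Variable T : Type.
Implicit Types (h : T -> R) (xs : list T).

Lemma fsum_app h xs ys : fsum h (xs ++ ys) = fsum h xs + fsum h ys.
Proof. induction xs as [|x xs IH]; simpl; [lra|]. unfold fsum in *; simpl. rewrite IH. lra. Qed.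

Lemma fsum_le h1 h2 xs : (forall x, h1 x <= h2 x) -> fsum h1 xs <= fsum h2 xs.
Proof. intros H. induction xs as [|x xs IH]; simpl; [lra|]. specialize (H x). lra. Qed.

Lemma fsum_ext h1 h2 xs : (forall x, h1 x = h2 x) -> fsum h1 xs = fsum h2 xs.
Proof. intros H. apply Rle_antisym; apply fsum_le; intro x; rewrite H; lra. Qed.

Lemma fsum_scal k h xs : fsum (fun x => k * h x) xs = k * fsum h xs.
Proof. induction xs as [|x xs IH]; simpl; [ring|]. unfold fsum in *; simpl. rewrite IH. ring. Qed.

Lemma fsum_map (U : Type) h (g : U -> T) (us : list U) :
  fsum h (map g us) = fsum (fun u => h (g u)) us.
Proof. induction us as [|u us IH]; simpl; auto. unfold fsum in *; simpl. rewrite IH. auto. Qed.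

End FiniteSums.

Definition lconst (A : Type) (c : R) : linf A :=
  @Linf A (fun _ => c) (ex_intro (fun M => A -> Rabs c <= M) (Rabs c) (fun _ => Rle_refl _)).
Arguments lconst {A} c.

Definition labs_sum (A : Type) (xs : list (linf A)) : linf A :=
  fold_right (fun x s => ladd (labs x) s) (lconst 0) xs.

Lemma labs_sum_eq (A : Type) (xs : list (linf A)) a :
  labs_sum xs a = fsum (fun x : linf A => Rabs (x a)) xs.
Proof. induction xs as [|x xs IH]; simpl; auto. rewrite IH. auto. Qed.

Lemma linf_bounded (A : Type) (x : linf A) : exists c, 0 < c /\ forall a, Rabs (x a) <= c.
Proof.
  destruct (lv_bdd x) as [M HM]. exists (Rabs M + 1). split.
  - pose proof (Rabs_pos M). lra.
  - intro a. specialize (HM a). pose proof (Rle_abs M). lra.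
Qed.

Section MonotoneSuperlinear.
Variable A : Type.

Record monotone_superlinear (P : linf A -> R) : Prop := {
  msl_hom : pos_homogeneous P ;
  msl_add : forall u w, P u + P w <= P (ladd u w) ;
  msl_mono : forall u w : linf A, (forall a, u a <= w a) -> P u <= P w }.

Definition shift_bounded (P : linf A -> R) (K : R) : Prop :=
  forall x c, 0 <= c -> P (ladd x (lconst c)) <= P x + c * K.

Lemma sup_msl (S : linf A -> R -> Prop) :
  (forall x, exists r, S x r) -> (forall x, bounded_above (S x)) ->
  (forall k x r, 0 < k -> S x r -> S (lscale k x) (k * r)) ->
  (forall u w r1 r2, S u r1 -> S w r2 -> exists r, S (ladd u w) r /\ r1 + r2 <= r) ->
  (forall (u w : linf A) r, (forall a, u a <= w a) -> S u r -> exists r', S w r' /\ r <= r') ->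
  monotone_superlinear (fun x => sup (S x)).
Proof.
  intros ne bnd scale add mono.
  assert (sup_mono : forall u w : linf A, (forall a, u a <= w a) -> sup (S u) <= sup (S w)).
  { intros u w Huw. apply sup_le_sup; auto. intros r Hr. exact (mono u w r Huw Hr). }
  split.
  - intros l x Hl. apply Rle_antisym.
    + assert (/ l * sup (S (lscale l x)) <= sup (S x)).
      { eapply Rle_trans; [|apply (sup_mono (lscale (/ l) (lscale l x)))].
        - apply sup_scal_le; auto; [apply Rinv_0_lt_compat; lra|].
          intros s Hs. exists (/ l * s). split; [|lra]. apply scale; auto.
          apply Rinv_0_lt_compat; lra.
        - intro a; simpl. right; field; lra. }
      apply Rmult_le_compat_l with (r := l) in H; [|lra]. field_simplify in H; lra.
    + apply sup_scal_le; auto. intros s Hs. exists (l * s). split; [apply scale|]; auto; lra.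
  - intros u w. apply sup_add_le; auto.
  - exact sup_mono.
Qed.

Section Properties.
Variable P : linf A -> R.
Hypothesis HP : monotone_superlinear P.

Lemma msl_ext (u w : linf A) : (forall a, u a = w a) -> P u = P w.
Proof. intros H. apply Rle_antisym; apply (msl_mono HP); intro a; rewrite H; lra. Qed.

Lemma msl_zero (z : linf A) : (forall a, z a = 0) -> P z = 0.
Proof.
  intros H. assert (P z = P (lscale 2 z)) by (apply msl_ext; intro a; simpl; rewrite H; ring).
  rewrite (msl_hom HP) in H0 by lra. lra.
Qed.

Lemma msl_ge0 (x : linf A) : (forall a, 0 <= x a) -> 0 <= P x.
Proof.
  intros H. rewrite <- (msl_zero (lconst 0)) by reflexivity.
  apply (msl_mono HP). exact H.
Qed.

Lemma msl_opp_le (x : linf A) : P x + P (lscale (-1) x) <= 0.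
Proof.
  rewrite <- (msl_zero (ladd x (lscale (-1) x))) by (intro; simpl; ring).
  apply (msl_add HP).
Qed.

Lemma msl_scale_le t (x : linf A) : P (lscale t x) <= t * P x.
Proof.
  destruct (Rtotal_order t 0) as [Hlt|[->|Hgt]].
  - rewrite (msl_ext (lscale t x) (lscale (-t) (lscale (-1) x))) by (intro; simpl; ring).
    rewrite (msl_hom HP) by lra. pose proof (msl_opp_le x). nra.
  - rewrite msl_zero by (intro; simpl; ring). lra.
  - rewrite (msl_hom HP) by lra. lra.
Qed.

Lemma msl_fsum_labs (xs : list (linf A)) :
  fsum (fun x => P (labs x)) xs <= P (labs_sum xs).
Proof.
  induction xs as [|x xs IH]; simpl.
  - apply msl_ge0. intro; simpl; lra.
  - eapply Rle_trans; [|apply (msl_add HP)]. unfold fsum in *. lra.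
Qed.

Lemma msl_le_const K (HK : shift_bounded P K) (x : linf A) c :
  0 <= c -> (forall a, x a <= c) -> P x <= c * K.
Proof.
  intros Hc Hx.
  apply Rle_trans with (P (ladd (lconst 0) (lconst c))).
  - apply (msl_mono HP). intro a; simpl. specialize (Hx a). lra.
  - pose proof (HK (lconst 0) c Hc). rewrite (msl_zero (lconst 0)) in H by reflexivity. lra.
Qed.

Lemma msl_odd_linear :
  (forall x, P (lscale (-1) x) = - P x) ->
  (forall x y, P (ladd x y) = P x + P y) /\ (forall l x, P (lscale l x) = l * P x).
Proof.
  intros Hodd. split.
  - intros x y. apply Rle_antisym; [|apply (msl_add HP)].
    pose proof (msl_add HP (lscale (-1) x) (lscale (-1) y)).
    rewrite (msl_ext (ladd (lscale (-1) x) (lscale (-1) y)) (lscale (-1) (ladd x y)))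
      in H by (intro; simpl; ring).
    rewrite !Hodd in H. lra.
  - intros l x. destruct (Rtotal_order l 0) as [Hlt|[->|Hgt]].
    + rewrite (msl_ext (lscale l x) (lscale (-l) (lscale (-1) x))) by (intro; simpl; ring).
      rewrite (msl_hom HP), Hodd by lra. ring.
    + rewrite msl_zero by (intro; simpl; ring). ring.
    + apply (msl_hom HP); auto.
Qed.

End Properties.

End MonotoneSuperlinear.

Section DirectionalExtension.
Variables (A : Type) (P : linf A -> R) (K : R) (y : linf A).
Hypotheses (HP : monotone_superlinear P) (HK : shift_bounded P K).

(* One-step Hahn-Banach extension of [P] in the direction of [y]. *)
Definition ext_set (x : linf A) (r : R) : Prop :=
  exists t, r = P (ladd x (lscale (- t) y)) - t * P (lscale (-1) y).

Definition ext (x : linf A) : R := sup (ext_set x).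

Lemma ext_set_le (x : linf A) B r :
  0 <= B -> (forall a, x a <= B) -> ext_set x r -> r <= B * K.
Proof.
  intros HB Hx [t ->].
  assert (P (ladd x (lscale (- t) y)) <= P (ladd (lscale (- t) y) (lconst B))).
  { apply (msl_mono HP). intro a; simpl. specialize (Hx a). lra. }
  pose proof (HK (lscale (- t) y) HB).
  pose proof (msl_scale_le HP t (lscale (-1) y)).
  rewrite (msl_ext HP (lscale t (lscale (-1) y)) (lscale (- t) y)) in H1
    by (intro; simpl; ring).
  lra.
Qed.

Lemma ext_set_bounded (x : linf A) : bounded_above (ext_set x).
Proof.
  destruct (linf_bounded x) as [B [HB Hx]]. exists (B * K).
  intros r. apply ext_set_le; [lra|]. intro a. specialize (Hx a).
  pose proof (Rle_abs (x a)). lra.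
Qed.

Lemma ext_set_self (x : linf A) : ext_set x (P x).
Proof.
  exists 0. rewrite (msl_ext HP (ladd x (lscale (- 0) y)) x) by (intro; simpl; ring). ring.
Qed.

Lemma ext_ge (x : linf A) : P x <= ext x.
Proof. apply sup_ub; [apply ext_set_bounded | apply ext_set_self]. Qed.

Lemma ext_dir : - P (lscale (-1) y) <= ext y.
Proof.
  apply sup_ub; [apply ext_set_bounded|]. exists 1.
  rewrite (msl_zero HP (ladd y (lscale (- (1)) y))) by (intro; simpl; ring). ring.
Qed.

Lemma ext_one : ext (lconst 1) <= K.
Proof.
  rewrite <- (Rmult_1_l K). apply sup_least; [eexists; apply ext_set_self|].
  intros r. apply ext_set_le; [lra|]. intro; simpl; lra.
Qed.

Lemma ext_msl : monotone_superlinear ext.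
Proof.
  apply sup_msl; [intro x; eexists; apply ext_set_self | exact ext_set_bounded | | |].
  - intros k x r Hk [t ->]. exists (k * t).
    rewrite (msl_ext HP (ladd (lscale k x) (lscale (- (k * t)) y))
               (lscale k (ladd x (lscale (- t) y)))) by (intro; simpl; ring).
    rewrite (msl_hom HP (l := k)) by exact Hk. ring.
  - intros u w r1 r2 [t1 ->] [t2 ->]. eexists. split; [exists (t1 + t2); reflexivity|].
    pose proof (msl_add HP (ladd u (lscale (- t1) y)) (ladd w (lscale (- t2) y))).
    rewrite (msl_ext HP (ladd (ladd u (lscale (- t1) y)) (ladd w (lscale (- t2) y)))
               (ladd (ladd u w) (lscale (- (t1 + t2)) y))) in H by (intro; simpl; ring).
    lra.
  - intros u w r Huw [t ->]. eexists. split; [exists t; reflexivity|].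
    enough (P (ladd u (lscale (- t) y)) <= P (ladd w (lscale (- t) y))) by lra.
    apply (msl_mono HP). intro a; simpl. specialize (Huw a). lra.
Qed.

End DirectionalExtension.

Lemma msl_extension (A : Type) (P : linf A -> R) K (y : linf A) :
  monotone_superlinear P -> shift_bounded P K ->
  exists Q, monotone_superlinear Q /\ (forall x, P x <= Q x) /\
            Q (lconst 1) <= K /\ - P (lscale (-1) y) <= Q y.
Proof.
  intros HP HK. exists (ext P y). split; [|split; [|split]].
  - exact (ext_msl y HP HK).
  - exact (ext_ge y HP HK).
  - exact (ext_one y HP HK).
  - exact (ext_dir y HP HK).
Qed.

Lemma FBL_sums_nil (A : Type) (f : linf A -> R) : FBL_sums f 0.
Proof. exists nil. split; [intro; simpl; lra | reflexivity]. Qed.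

Lemma FBL_norm_finite (A : Type) (f : linf A -> R) :
  FBL_norm f <> p_infty -> FBL_norm f = Finite (real (FBL_norm f)).
Proof.
  unfold FBL_norm. intros Hfin. destruct (Lub_Rbar_correct (FBL_sums f)) as [Hub _].
  destruct (Lub_Rbar (FBL_sums f)) as [N| |]; [reflexivity | contradiction |].
  destruct (Hub 0 (FBL_sums_nil f)).
Qed.

Section FBLMajorant.
Variables (A : Type) (f : linf A -> R) (N : R).
Hypotheses (f_hom : pos_homogeneous f) (f_ge0 : forall x, 0 <= f x)
  (f_norm : FBL_norm f = Finite N).

Lemma FBL_sums_fsum (xs : list (linf A)) : admissible xs -> FBL_sums f (fsum f xs).
Proof.
  intros Hxs. exists xs. split; auto.
  apply fsum_ext. intro x. rewrite Rabs_pos_eq; auto.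
Qed.

Lemma FBL_sums_le r : FBL_sums f r -> r <= N.
Proof.
  intros Hr. destruct (Lub_Rbar_correct (FBL_sums f)) as [Hub _].
  unfold FBL_norm in f_norm. rewrite f_norm in Hub. exact (Hub r Hr).
Qed.

Lemma fsum_le_FBL_norm (xs : list (linf A)) K :
  0 < K -> (forall a, fsum (fun x : linf A => Rabs (x a)) xs <= K) -> fsum f xs <= K * N.
Proof.
  intros HK Hxs.
  assert (Hsc : fsum f (map (lscale (/ K)) xs) = / K * fsum f xs).
  { rewrite fsum_map, <- fsum_scal. apply fsum_ext. intro x.
    apply f_hom, Rinv_0_lt_compat, HK. }
  assert (/ K * fsum f xs <= N).
  { rewrite <- Hsc. apply FBL_sums_le, FBL_sums_fsum. intro a.
    change (fsum (fun x : linf A => Rabs (x a)) (map (lscale (/ K)) xs) <= 1).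
    rewrite fsum_map.
    rewrite (fsum_ext _ (fun x : linf A => / K * Rabs (x a)))
      by (intro x; simpl; rewrite Rabs_mult, Rabs_pos_eq; [ring | left; apply Rinv_0_lt_compat, HK]).
    rewrite fsum_scal. specialize (Hxs a).
    apply Rmult_le_reg_l with K; auto. field_simplify; lra. }
  apply Rmult_le_compat_l with (r := K) in H; [|lra]. field_simplify in H; lra.
Qed.

Definition Phi_set (x : linf A) (r : R) : Prop :=
  exists c xs, 0 <= c /\ (forall a, fsum (fun z : linf A => Rabs (z a)) xs <= x a + c) /\
               r = fsum f xs - c * N.

Definition Phi (x : linf A) : R := sup (Phi_set x).

Lemma Phi_set_bounded (x : linf A) : bounded_above (Phi_set x).
Proof.
  destruct (linf_bounded x) as [B [HB Hx]]. exists (B * N).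
  intros r [c [xs [Hc [Hxs ->]]]].
  assert (fsum f xs <= (B + c) * N).
  { apply fsum_le_FBL_norm; [lra|]. intro a. specialize (Hxs a). specialize (Hx a).
    pose proof (Rle_abs (x a)). lra. }
  lra.
Qed.

Lemma Phi_set_nonempty (x : linf A) : exists r, Phi_set x r.
Proof.
  destruct (linf_bounded x) as [B [HB Hx]]. exists (0 - B * N), B, nil.
  split; [lra|]. split; [|reflexivity].
  intro a. simpl. specialize (Hx a). apply Rabs_le_between in Hx. lra.
Qed.

Lemma Phi_ub (x : linf A) r : Phi_set x r -> r <= Phi x.
Proof. apply sup_ub, Phi_set_bounded. Qed.

Lemma Phi_msl : monotone_superlinear Phi.
Proof.
  apply sup_msl; [exact Phi_set_nonempty | exact Phi_set_bounded | | |].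
  - intros k x r Hk [c [xs [Hc [Hxs ->]]]]. exists (k * c), (map (lscale k) xs).
    split; [nra | split].
    + intro a. rewrite fsum_map.
      rewrite (fsum_ext _ (fun z : linf A => k * Rabs (z a)))
        by (intro; simpl; rewrite Rabs_mult, Rabs_pos_eq; lra).
      rewrite fsum_scal. specialize (Hxs a). simpl. nra.
    + rewrite fsum_map, (fsum_ext (fun z => f (lscale k z)) (fun z => k * f z))
        by (intro; apply f_hom; lra).
      rewrite fsum_scal. ring.
  - intros u w s1 s2 [c1 [xs1 [Hc1 [Hxs1 ->]]]] [c2 [xs2 [Hc2 [Hxs2 ->]]]].
    eexists. split; [|apply Rle_refl].
    exists (c1 + c2), (xs1 ++ xs2). split; [lra | split].
    + intro a. rewrite fsum_app. specialize (Hxs1 a). specialize (Hxs2 a). simpl. lra.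
    + rewrite fsum_app. ring.
  - intros u w s Huw [c [xs [Hc [Hxs ->]]]]. eexists. split; [|apply Rle_refl].
    exists c, xs. split; [exact Hc | split; [|reflexivity]].
    intro a. specialize (Hxs a). specialize (Huw a). lra.
Qed.

Lemma Phi_shift_bounded : shift_bounded Phi N.
Proof.
  intros x c Hc. apply sup_least; [apply Phi_set_nonempty|].
  intros r [c' [xs [Hc' [Hxs ->]]]].
  enough (fsum f xs - (c + c') * N <= Phi x) by lra.
  apply Phi_ub. exists (c + c'), xs. split; [lra | split; [|reflexivity]].
  intro a. specialize (Hxs a). simpl in Hxs. lra.
Qed.

Lemma Phi_labs_ge (x : linf A) : f x <= Phi (labs x).
Proof.
  apply Phi_ub. exists 0, (x :: nil). split; [lra | split].
  - intro a. simpl. lra.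
  - unfold fsum; simpl. ring.
Qed.

Lemma Phi_one_ge : N <= Phi (lconst 1).
Proof.
  destruct (Lub_Rbar_correct (FBL_sums f)) as [_ Hlub].
  unfold FBL_norm in f_norm. rewrite f_norm in Hlub.
  apply (Hlub (Finite (Phi (lconst 1)))). intros r [xs [Hxs ->]]. simpl.
  apply Phi_ub. exists 0, xs. split; [lra | split].
  - intro a. rewrite Rplus_0_r. exact (Hxs a).
  - change (fsum (fun x => Rabs (f x)) xs = fsum f xs - 0 * N).
    rewrite (fsum_ext _ f) by (intro; apply Rabs_pos_eq, f_ge0). ring.
Qed.

End FBLMajorant.

Lemma FBL_norm_majorant (A : Type) (f g : linf A -> R) N :
  (forall x, 0 <= f x <= g x) -> FBL_norm f = Finite N ->
  (forall r, FBL_sums g r -> r <= N) -> FBL_norm g = Finite N.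
Proof.
  intros Hfg Hf Hg. apply is_lub_Rbar_unique. split; [exact Hg|].
  intros b Hb. destruct (Lub_Rbar_correct (FBL_sums f)) as [_ Hlub].
  unfold FBL_norm in Hf. rewrite Hf in Hlub. apply Hlub.
  intros r [xs [Hxs ->]].
  apply Rbar_le_trans with (Finite (fsum (fun x => Rabs (g x)) xs)).
  - apply fsum_le. intro x. specialize (Hfg x). rewrite !Rabs_pos_eq; lra.
  - apply Hb. exists xs. split; auto.
Qed.

Section Maximal.
Variables (A : Type) (f : linf A -> R) (N : R).
Hypotheses (f_hom : pos_homogeneous f) (f_ge0 : forall x, 0 <= f x)
  (f_norm : FBL_norm f = Finite N)
  (f_max : forall g, H0_pos g -> (forall x, f x <= g x) -> FBL_norm g = FBL_norm f -> g = f).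

Local Notation Phi := (Phi f N).
Let HPhi : monotone_superlinear Phi := Phi_msl f_hom f_ge0 f_norm.
Let HPhi_shift : shift_bounded Phi N := Phi_shift_bounded f_hom f_ge0 f_norm.

Lemma maximal_majorant (Theta : linf A -> R) :
  monotone_superlinear Theta -> (forall x, Phi x <= Theta x) -> Theta (lconst 1) <= N ->
  f = (fun x => Theta (labs x)).
Proof.
  intros HT HPT HT1. set (g := fun x => Theta (labs x)).
  assert (g_ge0 : forall x, 0 <= g x) by (intro; apply (msl_ge0 HT); intro; apply Rabs_pos).
  assert (f_le_g : forall x, f x <= g x).
  { intro x. eapply Rle_trans; [exact (Phi_labs_ge f_hom f_ge0 f_norm x) | apply HPT]. }
  assert (g_hom : pos_homogeneous g).
  { intros l x Hl. unfold g. rewrite <- (msl_hom HT (l := l)) by exact Hl.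
    apply (msl_ext HT). intro a; simpl. rewrite Rabs_mult, (Rabs_pos_eq l); lra. }
  assert (g_norm : FBL_norm g = Finite N).
  { apply (FBL_norm_majorant f); auto.
    intros r [xs [Hxs ->]].
    change (fsum (fun x => Rabs (g x)) xs <= N).
    rewrite (fsum_ext _ g) by (intro; apply Rabs_pos_eq, g_ge0).
    eapply Rle_trans; [apply (msl_fsum_labs HT)|].
    eapply Rle_trans; [|exact HT1]. apply (msl_mono HT).
    intro a. rewrite labs_sum_eq. exact (Hxs a). }
  symmetry. apply f_max; auto.
  - split; [split|]; auto. rewrite g_norm. discriminate.
  - rewrite g_norm, f_norm. reflexivity.
Qed.

Lemma Phi_opp (y : linf A) : Phi (lscale (-1) y) = - Phi y.
Proof.
  pose proof (msl_opp_le HPhi y) as Phi_opp_le.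
  enough (- Phi (lscale (-1) y) <= Phi y) by lra.
  destruct (msl_extension y HPhi HPhi_shift) as [Q [HQ [HPQ [HQ1 HQy]]]].
  assert (f_eq_Q : forall x, f x = Q (labs x))
    by (intro x; exact (f_equal (fun h => h x) (maximal_majorant HQ HPQ HQ1))).
  destruct (linf_bounded y) as [B [HB Hy]].
  set (z := ladd y (lconst B)).
  assert (z_ge0 : forall a, 0 <= z a).
  { intro a. specialize (Hy a). apply Rabs_le_between in Hy. simpl. lra. }
  assert (Qz_le : Q z <= Phi y + B * N).
  { rewrite (msl_ext HQ z (labs z)) by (intro a; symmetry; apply Rabs_pos_eq, z_ge0).
    rewrite <- f_eq_Q.
    eapply Rle_trans; [exact (Phi_labs_ge f_hom f_ge0 f_norm z)|].
    rewrite (msl_ext HPhi (labs z) z) by (intro a; apply Rabs_pos_eq, z_ge0).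
    apply HPhi_shift. lra. }
  assert (Qz_ge : Q y + B * N <= Q z).
  { eapply Rle_trans; [|apply (msl_add HQ)].
    enough (B * N <= Q (lconst B)) by lra.
    rewrite (msl_ext HQ (lconst B) (lscale B (lconst 1))) by (intro; simpl; ring).
    rewrite (msl_hom HQ (l := B)) by exact HB.
    apply Rmult_le_compat_l; [lra|].
    eapply Rle_trans; [exact (Phi_one_ge f_hom f_ge0 f_norm) | apply HPQ]. }
  lra.
Qed.

Lemma Phi_linf_dual : inhabited A -> linf_dual Phi.
Proof.
  intros [a0].
  destruct (msl_odd_linear HPhi Phi_opp) as [Hadd Hscale].
  split; [exact Hadd | split; [exact Hscale|]].
  exists N. intros x M Hx.
  assert (HM : 0 <= M) by (pose proof (Rabs_pos (x a0)); specialize (Hx a0); lra).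
  apply Rabs_le. rewrite <- Rmult_comm. split.
  - enough (Phi (lscale (-1) x) <= M * N) by (rewrite Phi_opp in H; lra).
    apply (msl_le_const HPhi HPhi_shift); [lra|]. intro a. specialize (Hx a).
    apply Rabs_le_between in Hx. simpl. lra.
  - apply (msl_le_const HPhi HPhi_shift); [lra|]. intro a. specialize (Hx a).
    apply Rabs_le_between in Hx. lra.
Qed.

Lemma maximal_eq_g_of_Phi : f = g_of Phi.
Proof.
  transitivity (fun x => Phi (labs x)).
  - apply (maximal_majorant HPhi (fun x => Rle_refl (Phi x))).
    apply Rle_trans with (1 * N); [|lra].
    apply (msl_le_const HPhi HPhi_shift); [lra|]. intro; simpl; lra.
  - apply functional_extensionality. intro x. unfold g_of.
    rewrite Rabs_pos_eq; auto. apply (msl_ge0 HPhi). intro; apply Rabs_pos.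
Qed.

End Maximal.

Theorem lemma4p7 (A : Type) (hA : inhabited A) (f : linf A -> R) :
  maximal f ->
  exists phi : linf A -> R, linf_dual phi /\ f = g_of phi.
Proof.
  intros [[[f_hom f_fin] f_ge0] f_max].
  pose proof (FBL_norm_finite f f_fin) as f_norm.
  exists (Phi f (real (FBL_norm f))). split.
  - exact (Phi_linf_dual f_hom f_ge0 f_norm f_max hA).
  - exact (maximal_eq_g_of_Phi f_hom f_ge0 f_norm f_max).
Qed.
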